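(* Let $\alpha\in(0,1)$ and $\nu\in\mathbb{N}$, and let $K_{\alpha,\nu}:\mathbb{R}\to\mathbb{R}$ be defined by \[ K_{\alpha,\nu}(x)=\sum_{k=0}^{\infty}2^{-2\alpha\nu k}\,\phi(2^{2\nu k}x), \] where $\phi:\mathbb{R}\to[0,1]$ is the $2$-periodic sawtooth function with $\phi(x)=|x|$ for $x\in[-1,1]$ and $\phi(x+2)=\phi(x)$ for all $x$. (i) $K_{\alpha,\nu}\in C^{0,\alpha}(\mathbb{R})$ for every $\nu\in\mathbb{N}$. Moreover $0\le K_{\alpha,\nu}\le 1/(1-2^{-2\nu\alpha})$, and for all $x,y\in\mathbb{R}$ with $|x-y|\le 2$, \[ |K_{\alpha,\nu}(x)-K_{\alpha,\nu}(y)|\le C(\alpha,\nu)\,|x-y|^{\alpha},\qquad C(\alpha,\nu):=\frac{1}{1-2^{-2\nu(1-\alpha)}}+\frac{2}{2^{2\nu(\alpha-1)}-2^{-2\nu}}. \] (ii) If $2\nu>1/(1-\alpha)$, then $K_{\alpha,\nu}$ is at no point of $\mathbb{R}$ pointwise H\''older continuous of order $\beta$, for any $\beta\in(\alpha,1]$. Moreover, for every $x\in\mathbb{R}$, every $m\in\mathbb{N}$ and every $\beta\in(\alpha,1]$, \[ \frac{|K_{\alpha,\nu}(x+t_m(x))-K_{\alpha,\nu}(x)|}{|t_m(x)|^{\beta}}\ \ge\ K(m,\nu,\alpha,\beta):=\frac{2^{\beta-1}\big(2^{2\nu(1-\alpha)}-2\big)}{2^{2\nu(1-\alpha)}-1}\big(2^{2\nu(\beta-\alpha)}\big)^{m},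 \] where $t_m:\mathbb{R}\to\{\pm 2^{-2\nu m-1}\}$ is the step function \[ t_m(x)=2^{-2\nu m-1}\sum_{i=-\infty}^{+\infty}\Big[\chi_{(i,i+\frac12]}(2^{2\nu m}x)-\chi_{(i+\frac12,i+1]}(2^{2\nu m}x)\Big], \] i.e. $t_m(x)=+2^{-2\nu m-1}$ if $i2^{-2\nu m}<x\le i2^{-2\nu m}+2^{-2\nu m-1}$ for some $i\in\mathbb{Z}$, and $t_m(x)=-2^{-2\nu m-1}$ if $i2^{-2\nu m}+2^{-2\nu m-1}<x\le (i+1)2^{-2\nu m}$ for some $i\in\mathbb{Z}$.
   Context: A function $f\in C^0(\mathbb{R})$ is called (pointwise) H\''older continuous of order $\beta$ ($C^{0,\beta}$) at $x\in\mathbb{R}$ if there exist $r,C>0$ such that $|f(y)-f(x)|\le C|y-x|^{\beta}$ for all $y\in[x-r,x+r]$. $\chi_A$ denotes the indicator function of a set $A$. *)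

From Stdlib Require Import Reals Lra ZArith.
From Stdlib Require Import Classical ClassicalEpsilon.
From Coquelicot Require Import Coquelicot.
Open Scope R_scope.

(* a ^ b for a >= 0, b real, with the convention 0 ^ b = 0 (used only for b > 0). *)
Definition rpow (a b : R) : R := if Rle_dec a 0 then 0 else Rpower a b.

(* The 2-periodic sawtooth: phi x = |x - 2n| where 2n is the even integer with
   x - 2n in [-1,1); so phi x = |x| on [-1,1] and phi (x+2) = phi x. *)
Definition phi (x : R) : R := Rabs (x - 2 * IZR (Int_part ((x + 1) / 2))).

Definition Kan (alpha : R) (nu : nat) (x : R) : R :=
  Series (fun k : nat => Rpower 2 (- (2 * alpha * INR nu * INR k)) * phi (2 ^ (2 * nu * k) * x)).

Definition holder_at (f : R -> R) (beta x : R) : Prop :=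
  exists r C : R, 0 < r /\ 0 < C /\
    forall y, x - r <= y <= x + r -> Rabs (f y - f x) <= C * rpow (Rabs (y - x)) beta.

Definition holder_global (f : R -> R) (alpha : R) : Prop :=
  (forall x, continuity_pt f x) /\
  exists C : R, forall x y, Rabs (f x - f y) <= C * rpow (Rabs (x - y)) alpha.

Definition tm (nu m : nat) (x : R) : R :=
  let s := / 2 ^ (2 * nu * m) in
  if excluded_middle_informative (exists i : Z, IZR i * s < x <= IZR i * s + s / 2)
  then s / 2 else - (s / 2).

Definition Cconst (alpha : R) (nu : nat) : R :=
  1 / (1 - Rpower 2 (- (2 * INR nu * (1 - alpha))))
  + 2 / (Rpower 2 (2 * INR nu * (alpha - 1)) - Rpower 2 (- (2 * INR nu))).

Definition Kconst (m nu : nat) (alpha beta : R) : R :=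
  Rpower 2 (beta - 1) * (Rpower 2 (2 * INR nu * (1 - alpha)) - 2)
  / (Rpower 2 (2 * INR nu * (1 - alpha)) - 1)
  * (Rpower 2 (2 * INR nu * (beta - alpha))) ^ m.

From Stdlib Require Import Reals Lra Lia ZArith ClassicalEpsilon.
From Coquelicot Require Import Coquelicot.
Open Scope R_scope.

(* Put b = 2^(2 nu), r = b^(-alpha) and q = r b = b^(1-alpha) > 1.  The k-th term of
   K_{alpha,nu} is bounded by r^k and is q^k-Lipschitz; for b^(-N-1) < |x - y| <= b^(-N)
   the Lipschitz bounds for k <= N and the sup bounds for k > N add up to
   C(alpha,nu) |x - y|^alpha.  Conversely, for k <= m the points 2^(2 nu k) x and
   2^(2 nu k) (x + t_m(x)) lie on one linear piece of phi, while for k > m they differ by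
   an even integer.  Hence K(x + t_m(x)) - K(x) is a finite sum of terms +-q^k |t_m(x)|,
   dominated by the last one as soon as q > 2, i.e. 2 nu (1 - alpha) > 1; this gives
   |K(x + t_m(x)) - K(x)| >= (q - 2)/(q - 1) q^m |t_m(x)|, which beats any C |t_m(x)|^beta
   as m grows when beta > alpha. *)

Lemma Rpower_pos a y : 0 < Rpower a y.
Proof. unfold Rpower; apply exp_pos. Qed.

Lemma Rpower_opp_INR b n : 0 < b -> Rpower b (- INR n) = / b ^ n.
Proof. intros Hb; rewrite Rpower_Ropp, Rpower_pow; auto. Qed.

Lemma pow_ge_linear b n : 1 <= b -> 1 + INR n * (b - 1) <= b ^ n.
Proof.
  intros Hb. replace (b ^ n) with ((1 + (b - 1)) ^ n) by (f_equal; ring).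
  apply Rle_pow_lin; lra.
Qed.

Lemma Series_const_0 : Series (fun _ => 0) = 0.
Proof.
  rewrite (Series_ext _ (fun _ => 0 * 0)) by (intros; ring).
  rewrite (Series_scal_l 0 (fun _ => 0)). ring.
Qed.

Lemma Rpower_opp_INR_bracket b h : 1 < b -> 0 < h <= 1 ->
  exists N, Rpower b (- INR (S N)) < h <= Rpower b (- INR N).
Proof.
  intros Hb Hh.
  assert (Hex : exists n, Rpower b (- INR n) < h).
  { destruct (INR_archimed (b - 1) (/ h)) as [n Hn]; [lra|].
    exists n. rewrite Rpower_opp_INR by lra.
    pose proof (pow_ge_linear b n ltac:(lra)).
    assert (0 < / h) by (apply Rinv_0_lt_compat; lra).
    rewrite <- (Rinv_inv h). apply Rinv_lt_contravar; [|lra].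
    apply Rmult_lt_0_compat; [|apply pow_lt]; lra. }
  destruct Hex as [n Hn]. induction n as [|n IH].
  - simpl in Hn. rewrite Ropp_0, Rpower_O in Hn by lra. lra.
  - destruct (Rlt_dec (Rpower b (- INR n)) h) as [H|H].
    + exact (IH H).
    + exists n. split; [exact Hn | lra].
Qed.

Lemma pow2_IZR n : exists z : Z, 2 ^ n = IZR z /\ (0 < z)%Z.
Proof.
  exists (Z.of_nat (2 ^ n)). rewrite <- INR_IZR_INZ, pow_INR. simpl INR. split.
  - f_equal; lra.
  - assert (0 < 2 ^ n)%nat by (apply Nat.neq_0_lt_0, Nat.pow_nonzero; lia). lia.
Qed.

Lemma unit_interval_div (i M : Z) a c : (0 < M)%Z ->
  IZR i <= a <= IZR i + 1 -> IZR i <= c <= IZR i + 1 ->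
  exists j : Z, IZR j <= a / IZR M <= IZR j + 1 /\ IZR j <= c / IZR M <= IZR j + 1.
Proof.
  intros HM Ha Hc. exists (i / M)%Z.
  pose proof (Z.div_mod i M ltac:(lia)) as Hd. pose proof (Z.mod_pos_bound i M HM) as Hb.
  set (j := (i / M)%Z) in *. set (rr := (i mod M)%Z) in *.
  assert (Hi : IZR i = IZR M * IZR j + IZR rr)
    by (rewrite Hd at 1; rewrite plus_IZR, mult_IZR; ring).
  assert (Hr0 : 0 <= IZR rr) by (apply IZR_le; lia).
  assert (Hr1 : IZR rr + 1 <= IZR M) by (rewrite <- plus_IZR; apply IZR_le; lia).
  assert (HM' : 0 < IZR M) by (apply IZR_lt; lia).
  repeat split; [apply Rle_div_r | apply Rle_div_l | apply Rle_div_r | apply Rle_div_l];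
    nra.
Qed.

Lemma phi_nearest_even x :
  exists n : Z, phi x = Rabs (x - 2 * IZR n) /\ -1 <= x - 2 * IZR n < 1.
Proof.
  exists (Int_part ((x + 1) / 2)). split; [reflexivity|].
  destruct (base_Int_part ((x + 1) / 2)). lra.
Qed.

Lemma dist_two_evens_ge a k n : k <> n -> Rabs (a - 2 * IZR k) + Rabs (a - 2 * IZR n) >= 2.
Proof.
  intros Hkn.
  assert (H : (1 <= k - n)%Z \/ (1 <= n - k)%Z) by lia.
  destruct H as [H|H]; apply IZR_le in H; rewrite minus_IZR in H;
    unfold Rabs; repeat destruct Rcase_abs; lra.
Qed.

Lemma phi_le_dist_even x k : phi x <= Rabs (x - 2 * IZR k).
Proof.
  destruct (phi_nearest_even x) as [n [-> H]].
  destruct (Z.eq_dec k n) as [->|Hk]; [lra|].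
  pose proof (dist_two_evens_ge x k n Hk). unfold Rabs in *; repeat destruct Rcase_abs; lra.
Qed.

Lemma phi_eq_dist_even x k : -1 <= x - 2 * IZR k <= 1 -> phi x = Rabs (x - 2 * IZR k).
Proof.
  intros Hx. destruct (phi_nearest_even x) as [n [-> H]].
  destruct (Z.eq_dec k n) as [->|Hk]; [lra|].
  pose proof (dist_two_evens_ge x k n Hk). unfold Rabs in *; repeat destruct Rcase_abs; lra.
Qed.

Lemma phi_bounds x : 0 <= phi x <= 1.
Proof.
  destruct (phi_nearest_even x) as [n [-> H]]. unfold Rabs; destruct Rcase_abs; lra.
Qed.

Lemma phi_lipschitz x y : Rabs (phi x - phi y) <= Rabs (x - y).
Proof.
  pose proof (phi_le_dist_even x) as Hx. pose proof (phi_le_dist_even y) as Hy.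
  destruct (phi_nearest_even x) as [n [Ex _]]. destruct (phi_nearest_even y) as [m [Ey _]].
  specialize (Hx m). specialize (Hy n). rewrite Ex, Ey in *.
  unfold Rabs in *; repeat destruct Rcase_abs; lra.
Qed.

Lemma phi_shift_even x k : phi (x + 2 * IZR k) = phi x.
Proof.
  destruct (phi_nearest_even x) as [n [-> H]].
  rewrite (phi_eq_dist_even _ (n + k)); rewrite plus_IZR; [f_equal; ring | lra].
Qed.

Lemma phi_dist_on_unit_interval (j : Z) a c :
  IZR j <= a <= IZR j + 1 -> IZR j <= c <= IZR j + 1 -> Rabs (phi c - phi a) = Rabs (c - a).
Proof.
  intros Ha Hc. destruct (Z.Even_or_Odd j) as [[n ->]|[n ->]].
  - rewrite mult_IZR in Ha, Hc.
    rewrite (phi_eq_dist_even a n), (phi_eq_dist_even c n) by lra.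
    rewrite (Rabs_right (a - _)), (Rabs_right (c - _)) by lra. f_equal; ring.
  - rewrite plus_IZR, mult_IZR in Ha, Hc.
    rewrite (phi_eq_dist_even a (n + 1)), (phi_eq_dist_even c (n + 1))
      by (rewrite plus_IZR; lra).
    rewrite plus_IZR, (Rabs_left1 (a - _)), (Rabs_left1 (c - _)) by lra.
    rewrite <- Rabs_Ropp. f_equal; ring.
Qed.

Lemma sum_f_R0_abs_ge_last (a : nat -> R) c q m : 1 < q ->
  (forall k, (k <= m)%nat -> Rabs (a k) = c * q ^ k) ->
  c * q ^ m - c * (q ^ m - 1) / (q - 1) <= Rabs (sum_f_R0 a m).
Proof.
  intros Hq Ha. destruct m as [|m].
  - simpl sum_f_R0. rewrite (Ha 0%nat) by lia. simpl. right; field; lra.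
  - rewrite tech5, <- (Ha (S m)) by lia.
    assert (Hhead : Rabs (sum_f_R0 a m) <= c * (q ^ S m - 1) / (q - 1)).
    { eapply Rle_trans; [apply sum_f_R0_triangle|].
      rewrite (sum_eq _ (fun k => q ^ k * c)) by (intros k Hk; rewrite Ha by lia; ring).
      rewrite <- scal_sum, tech3 by lra. right; field; lra. }
    pose proof (Rabs_triang_inv (a (S m)) (- sum_f_R0 a m)) as Htri.
    rewrite Rabs_Ropp in Htri. replace (a (S m) - - sum_f_R0 a m)
      with (sum_f_R0 a m + a (S m)) in Htri by ring. lra.
Qed.

Lemma tm_spec nu m x : exists (i : Z) (sg : R), (sg = 1 \/ sg = -1) /\
  tm nu m x = sg * (/ 2 ^ (2 * nu * m) / 2) /\
  IZR i <= 2 ^ (2 * nu * m) * x <= IZR i + 1 /\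
  IZR i <= 2 ^ (2 * nu * m) * x + sg / 2 <= IZR i + 1.
Proof.
  unfold tm. set (p := 2 ^ (2 * nu * m)).
  assert (Hp : 0 < p) by (apply pow_lt; lra).
  assert (Hs : 0 < / p) by (apply Rinv_0_lt_compat; lra).
  destruct excluded_middle_informative as [[i Hi]|Hn].
  - exists i, 1. split; [left; reflexivity|]. split; [ring|].
    assert (IZR i < p * x).
    { replace (IZR i) with (p * (IZR i * / p)) by (field; lra).
      apply Rmult_lt_compat_l; lra. }
    assert (p * x <= IZR i + / 2).
    { replace (IZR i + / 2) with (p * (IZR i * / p + / p / 2)) by (field; lra).
      apply Rmult_le_compat_l; lra. }
    split; lra.
  - set (i := (- up (- (p * x)))%Z).
    destruct (archimed (- (p * x))) as [A1 A2].
    assert (Hi : IZR i = - IZR (up (- (p * x)))) by apply opp_IZR.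
    exists i, (-1). split; [right; reflexivity|]. split; [ring|].
    assert (IZR i * / p < x).
    { apply (Rmult_lt_reg_l p); [lra|].
      replace (p * (IZR i * / p)) with (IZR i) by (field; lra). lra. }
    assert (x > IZR i * / p + / p / 2)
      by (apply Rnot_le_lt; intro; apply Hn; exists i; split; lra).
    assert (p * x > IZR i + / 2).
    { replace (IZR i + / 2) with (p * (IZR i * / p + / p / 2)) by (field; lra).
      apply Rmult_lt_compat_l; lra. }
    split; lra.
Qed.

Lemma tm_abs nu m x : Rabs (tm nu m x) = / 2 ^ (2 * nu * m) / 2.
Proof.
  assert (0 < / 2 ^ (2 * nu * m)) by (apply Rinv_0_lt_compat, pow_lt; lra).
  destruct (tm_spec nu m x) as [i [sg [Hsg [-> _]]]].
  rewrite Rabs_mult, (Rabs_right (_ / 2)) by lra.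
  destruct Hsg; subst; unfold Rabs; destruct Rcase_abs; lra.
Qed.

Lemma tm_eventually_small nu x r0 : (1 <= nu)%nat -> 0 < r0 ->
  exists N, forall m, (N <= m)%nat -> Rabs (tm nu m x) <= r0.
Proof.
  intros Hnu Hr0. destruct (INR_archimed 1 (/ r0)) as [N HN]; [lra|].
  exists N. intros m Hm. rewrite tm_abs.
  assert (Hinv : 0 < / r0) by (apply Rinv_0_lt_compat; lra).
  assert (Hm' : INR N <= INR (2 * nu * m)) by (apply le_INR; nia).
  pose proof (pow_ge_linear 2 (2 * nu * m) ltac:(lra)).
  assert (Hp : / r0 < 2 ^ (2 * nu * m)) by lra.
  assert (/ 2 ^ (2 * nu * m) < r0).
  { rewrite <- (Rinv_inv r0). apply Rinv_lt_contravar; [|lra].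
    apply Rmult_lt_0_compat; lra. }
  assert (0 < / 2 ^ (2 * nu * m)) by (apply Rinv_0_lt_compat, pow_lt; lra). lra.
Qed.

Lemma phi_tm_head nu m k x : (k <= m)%nat ->
  Rabs (phi (2 ^ (2 * nu * k) * (x + tm nu m x)) - phi (2 ^ (2 * nu * k) * x)) =
  2 ^ (2 * nu * k) * Rabs (tm nu m x).
Proof.
  intros Hk. rewrite tm_abs. destruct (tm_spec nu m x) as [i [sg [Hsg [-> [H1 H2]]]]].
  destruct (pow2_IZR (2 * nu * (m - k))) as [z [Hz Hz0]].
  set (P := 2 ^ (2 * nu * k)). set (PM := 2 ^ (2 * nu * m)) in *.
  assert (Hpm : PM = P * IZR z) by (unfold PM, P; rewrite <- Hz, <- pow_add; f_equal; nia).
  assert (HP : 0 < P) by (apply pow_lt; lra).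
  assert (HZ : 0 < IZR z) by (apply IZR_lt; lia).
  destruct (unit_interval_div i z (PM * x) (PM * x + sg / 2) Hz0 H1 H2) as [j [J1 J2]].
  replace (PM * x / IZR z) with (P * x) in J1 by (rewrite Hpm; field; lra).
  replace ((PM * x + sg / 2) / IZR z) with (P * (x + sg * (/ PM / 2))) in J2
    by (rewrite Hpm; field; lra).
  rewrite (phi_dist_on_unit_interval j _ _ J1 J2).
  replace (P * (x + sg * (/ PM / 2)) - P * x) with (sg * (P * (/ PM / 2))) by ring.
  assert (0 < PM) by (rewrite Hpm; nra).
  assert (0 < / PM) by (apply Rinv_0_lt_compat; lra).
  rewrite Rabs_mult, (Rabs_right (P * _)) by nra.
  destruct Hsg; subst sg; unfold Rabs; destruct Rcase_abs; lra.
Qed.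

Lemma phi_tm_tail nu m k x : (1 <= nu)%nat -> (m < k)%nat ->
  phi (2 ^ (2 * nu * k) * (x + tm nu m x)) = phi (2 ^ (2 * nu * k) * x).
Proof.
  intros Hnu Hk. destruct (tm_spec nu m x) as [i [sg [Hsg [-> _]]]].
  destruct (pow2_IZR (2 * nu * (k - m) - 2)) as [z [Hz _]].
  assert (Hpk : 2 ^ (2 * nu * k) = 2 ^ (2 * nu * m) * (2 * 2 * IZR z)).
  { rewrite <- Hz, Rmult_assoc, !tech_pow_Rmult, <- pow_add. f_equal. nia. }
  assert (0 < 2 ^ (2 * nu * m)) by (apply pow_lt; lra).
  destruct Hsg; subst sg.
  - replace (2 ^ (2 * nu * k) * (x + 1 * (/ 2 ^ (2 * nu * m) / 2)))
      with (2 ^ (2 * nu * k) * x + 2 * IZR z) by (rewrite Hpk; field; lra).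
    apply phi_shift_even.
  - replace (2 ^ (2 * nu * k) * (x + -1 * (/ 2 ^ (2 * nu * m) / 2)))
      with (2 ^ (2 * nu * k) * x + 2 * IZR (- z)) by (rewrite Hpk, opp_IZR; field; lra).
    apply phi_shift_even.
Qed.

Definition scale (nu : nat) : R := Rpower 2 (2 * INR nu).

Lemma scale_ge_4 nu : (1 <= nu)%nat -> 4 <= scale nu.
Proof.
  intros H. unfold scale. replace 4 with (Rpower 2 (INR 2)).
  - apply Rle_Rpower; [lra|]. apply le_INR in H. simpl in *. lra.
  - rewrite Rpower_pow by lra. simpl; lra.
Qed.

Lemma pow2_scale nu k : 2 ^ (2 * nu * k) = scale nu ^ k.
Proof.
  rewrite pow_mult. unfold scale. rewrite <- (Rpower_pow (2 * nu) 2), mult_INR by lra.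
  reflexivity.
Qed.

Lemma Rpower2_scale nu t : Rpower 2 (2 * INR nu * t) = Rpower (scale nu) t.
Proof. unfold scale; rewrite Rpower_mult; reflexivity. Qed.

Definition term (alpha : R) (nu : nat) (x : R) (k : nat) : R :=
  Rpower 2 (- (2 * alpha * INR nu * INR k)) * phi (2 ^ (2 * nu * k) * x).

Definition term_diff (alpha : R) (nu : nat) (x y : R) (k : nat) : R :=
  term alpha nu x k - term alpha nu y k.

Section Kernel.

Variables (alpha : R) (nu : nat).
Hypotheses (Ha : 0 < alpha < 1) (Hnu : (1 <= nu)%nat).

Let b := scale nu.
Let r := Rpower b (- alpha).
Let q := Rpower b (1 - alpha).

Lemma scale_weight k : Rpower 2 (- (2 * alpha * INR nu * INR k)) = r ^ k.
Proof.
  unfold r. rewrite <- Rpower_pow by apply Rpower_pos.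
  unfold b, scale. rewrite !Rpower_mult. f_equal; ring.
Qed.

Lemma ratio_bounds : 0 < r < 1.
Proof.
  split; [apply Rpower_pos|]. pose proof (scale_ge_4 nu Hnu).
  unfold r. rewrite <- (Rpower_O b) by (unfold b; lra). apply Rpower_lt; unfold b; lra.
Qed.

Lemma ratio_mul_scale : r * b = q.
Proof.
  pose proof (scale_ge_4 nu Hnu).
  unfold r, q. rewrite <- (Rpower_1 b) at 2 by (unfold b; lra).
  rewrite <- Rpower_plus. f_equal; ring.
Qed.

Lemma lipschitz_ratio_gt_1 : 1 < q.
Proof.
  pose proof (scale_ge_4 nu Hnu).
  unfold q. rewrite <- (Rpower_O b) at 1 by (unfold b; lra). apply Rpower_lt; unfold b; lra.
Qed.

Lemma geom_ratio_summable : ex_series (fun k => r ^ k).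
Proof. apply ex_series_geom. pose proof ratio_bounds. rewrite Rabs_right; lra. Qed.

Lemma geom_ratio_Series : Series (fun k => r ^ k) = / (1 - r).
Proof. apply Series_geom. pose proof ratio_bounds. rewrite Rabs_right; lra. Qed.

Lemma term_bounds x k : 0 <= term alpha nu x k <= r ^ k.
Proof.
  unfold term. rewrite scale_weight. pose proof (phi_bounds (2 ^ (2 * nu * k) * x)).
  pose proof (pow_lt r k (proj1 ratio_bounds)). nra.
Qed.

Lemma term_summable x : ex_series (term alpha nu x).
Proof.
  apply (@ex_series_le R_AbsRing R_CompleteNormedModule _ (fun k => r ^ k));
    [|apply geom_ratio_summable].
  intros k. change (norm (term alpha nu x k)) with (Rabs (term alpha nu x k)).
  pose proof (term_bounds x k). rewrite Rabs_right; lra.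
Qed.

Lemma Kan_bounds x : 0 <= Kan alpha nu x <= / (1 - r).
Proof.
  change (Kan alpha nu x) with (Series (term alpha nu x)). split.
  - rewrite <- Series_const_0. apply Series_le; [|apply term_summable].
    intros k; pose proof (term_bounds x k); lra.
  - rewrite <- geom_ratio_Series. apply Series_le; [apply term_bounds | apply geom_ratio_summable].
Qed.

Lemma Kan_sub x y : Kan alpha nu x - Kan alpha nu y = Series (term_diff alpha nu x y).
Proof. unfold Kan, term_diff. rewrite Series_minus; auto; apply term_summable. Qed.

Lemma term_diff_le_pow x y k : Rabs (term_diff alpha nu x y k) <= r ^ k.
Proof.
  unfold term_diff. pose proof (term_bounds x k). pose proof (term_bounds y k).
  unfold Rabs; destruct Rcase_abs; lra.
Qed.

Lemma term_diff_lipschitz x y k : Rabs (term_diff alpha nu x y k) <= q ^ k * Rabs (x - y).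
Proof.
  unfold term_diff, term. rewrite scale_weight, !pow2_scale. fold b.
  rewrite <- Rmult_minus_distr_l, Rabs_mult, <- ratio_mul_scale, Rpow_mult_distr.
  pose proof (phi_lipschitz (b ^ k * x) (b ^ k * y)) as Hphi.
  rewrite <- Rmult_minus_distr_l, Rabs_mult in Hphi.
  pose proof (pow_lt r k (proj1 ratio_bounds)).
  pose proof (pow_lt b k ltac:(pose proof (scale_ge_4 nu Hnu); unfold b; lra)).
  rewrite (Rabs_right (r ^ k)) by lra. rewrite (Rabs_right (b ^ k)) in Hphi by lra.
  rewrite Rmult_assoc. apply Rmult_le_compat_l; lra.
Qed.

Lemma abs_term_diff_summable x y : ex_series (fun k => Rabs (term_diff alpha nu x y k)).
Proof.
  apply (@ex_series_le R_AbsRing R_CompleteNormedModule _ (fun k => r ^ k));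
    [|apply geom_ratio_summable].
  intros k. change (norm (Rabs (term_diff alpha nu x y k)))
    with (Rabs (Rabs (term_diff alpha nu x y k))).
  rewrite Rabs_Rabsolu. apply term_diff_le_pow.
Qed.

Lemma Kan_sub_le x y : Rabs (Kan alpha nu x - Kan alpha nu y) <= / (1 - r).
Proof.
  rewrite Kan_sub. eapply Rle_trans; [apply Series_Rabs, abs_term_diff_summable|].
  rewrite <- geom_ratio_Series. apply Series_le; [|apply geom_ratio_summable].
  intros; split; [apply Rabs_pos | apply term_diff_le_pow].
Qed.

Lemma Kan_sub_le_split N x y : Rabs (Kan alpha nu x - Kan alpha nu y) <=
  Rabs (x - y) * ((q ^ S N - 1) / (q - 1)) + r ^ S N / (1 - r).
Proof.
  pose proof lipschitz_ratio_gt_1. pose proof ratio_bounds.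
  rewrite Kan_sub. eapply Rle_trans; [apply Series_Rabs, abs_term_diff_summable|].
  rewrite (Series_incr_n _ (S N)) by (lia || apply abs_term_diff_summable).
  simpl Init.Nat.pred. apply Rplus_le_compat.
  - eapply Rle_trans; [apply sum_Rle; intros; apply term_diff_lipschitz|].
    rewrite <- scal_sum, tech3 by lra. right; field; lra.
  - eapply Rle_trans; [apply (Series_le _ (fun k => r ^ (S N + k)))|].
    + intros; split; [apply Rabs_pos | apply term_diff_le_pow].
    + apply (ex_series_incr_n (fun k => r ^ k)), geom_ratio_summable.
    + rewrite (Series_ext _ (fun k => r ^ S N * r ^ k)) by (intros; apply pow_add).
      rewrite Series_scal_l. unfold Rdiv. rewrite <- geom_ratio_Series. right; reflexivity.
Qed.

Lemma Cconst_eq : Cconst alpha nu = q / (q - 1) + 2 * q / (1 - r).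
Proof.
  pose proof ratio_mul_scale. pose proof ratio_bounds. pose proof lipschitz_ratio_gt_1.
  pose proof (scale_ge_4 nu Hnu).
  unfold Cconst.
  replace (- (2 * INR nu * (1 - alpha))) with (2 * INR nu * (- (1 - alpha))) by ring.
  replace (2 * INR nu * (alpha - 1)) with (2 * INR nu * (- (1 - alpha))) by ring.
  replace (- (2 * INR nu)) with (2 * INR nu * Ropp 1) by ring.
  rewrite !Rpower2_scale, !Rpower_Ropp, Rpower_1 by lra. fold b q.
  rewrite <- ratio_mul_scale. field. repeat split; nra.
Qed.

Lemma Cconst_pos : 0 < Cconst alpha nu.
Proof.
  pose proof ratio_bounds. pose proof lipschitz_ratio_gt_1. rewrite Cconst_eq.
  assert (0 < q / (q - 1)) by (apply Rdiv_lt_0_compat; lra).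
  assert (0 < 2 * q / (1 - r)) by (apply Rdiv_lt_0_compat; lra). lra.
Qed.

Lemma lipschitz_part_le h N : 0 < h <= Rpower b (- INR N) ->
  h * ((q ^ S N - 1) / (q - 1)) <= q / (q - 1) * Rpower h alpha.
Proof.
  intros Hh. pose proof lipschitz_ratio_gt_1. pose proof (scale_ge_4 nu Hnu).
  assert (Hhq : h * q ^ S N <= Rpower h alpha * q).
  { assert (Eh : h = Rpower h alpha * Rpower h (1 - alpha)).
    { rewrite <- Rpower_plus. replace (alpha + (1 - alpha)) with 1 by ring.
      rewrite Rpower_1; lra. }
    assert (Hh' : Rpower h (1 - alpha) <= Rpower b (- INR N * (1 - alpha))).
    { rewrite <- Rpower_mult. apply Rle_Rpower_l; [lra | auto]. }
    assert (Eq : q ^ S N = Rpower b ((1 - alpha) * INR (S N))).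
    { unfold q. rewrite <- Rpower_pow, Rpower_mult by apply Rpower_pos. reflexivity. }
    assert (Ebq : Rpower b (- INR N * (1 - alpha)) * Rpower b ((1 - alpha) * INR (S N)) = q).
    { rewrite <- Rpower_plus. unfold q. f_equal. rewrite S_INR. ring. }
    pose proof (Rpower_pos h alpha). pose proof (Rpower_pos b ((1 - alpha) * INR (S N))).
    rewrite Eh at 1. rewrite Eq, <- Ebq. rewrite Rmult_assoc.
    apply Rmult_le_compat_l; [lra|]. apply Rmult_le_compat_r; lra. }
  apply Rle_trans with ((h * q ^ S N - h) / (q - 1)); [right; field; lra|].
  replace (q / (q - 1) * Rpower h alpha) with (Rpower h alpha * q / (q - 1)) by (field; lra).
  apply Rmult_le_compat_r; [left; apply Rinv_0_lt_compat|]; lra.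
Qed.

Lemma tail_part_le h N : 0 < h -> Rpower b (- INR (S N)) < h ->
  r ^ S N / (1 - r) <= 2 * q / (1 - r) * Rpower h alpha.
Proof.
  intros Hh HN. pose proof ratio_bounds. pose proof lipschitz_ratio_gt_1.
  pose proof (scale_ge_4 nu Hnu).
  assert (Hr : r ^ S N <= Rpower h alpha).
  { unfold r. rewrite <- Rpower_pow, Rpower_mult by apply Rpower_pos.
    replace (- alpha * INR (S N)) with (- INR (S N) * alpha) by ring.
    rewrite <- Rpower_mult. apply Rle_Rpower_l; [lra|]. split; [apply Rpower_pos | lra]. }
  assert (0 < / (1 - r)) by (apply Rinv_0_lt_compat; lra).
  assert (0 < Rpower h alpha * / (1 - r)) by (apply Rmult_lt_0_compat; [apply Rpower_pos | lra]).
  unfold Rdiv. apply Rle_trans with (Rpower h alpha * / (1 - r)); [apply Rmult_le_compat_r|]; nra.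
Qed.

Lemma Kan_holder_pos x y : 0 < Rabs (x - y) ->
  Rabs (Kan alpha nu x - Kan alpha nu y) <= Cconst alpha nu * Rpower (Rabs (x - y)) alpha.
Proof.
  intros Hh. pose proof ratio_bounds. pose proof lipschitz_ratio_gt_1.
  pose proof (scale_ge_4 nu Hnu). set (h := Rabs (x - y)) in *.
  rewrite Cconst_eq, Rmult_plus_distr_r.
  destruct (Rle_dec h 1) as [Hh1|Hh1].
  - destruct (Rpower_opp_INR_bracket b h ltac:(unfold b; lra) ltac:(lra)) as [N [HN1 HN2]].
    eapply Rle_trans; [apply (Kan_sub_le_split N)|]. fold h.
    apply Rplus_le_compat; [apply lipschitz_part_le | apply (tail_part_le _ N)]; auto.
  - assert (Hpow : 1 <= Rpower h alpha).
    { rewrite <- (Rpower_O h) by lra. apply Rle_Rpower; lra. }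
    assert (0 < q / (q - 1)) by (apply Rdiv_lt_0_compat; lra).
    assert (/ (1 - r) <= 2 * q / (1 - r) * Rpower h alpha).
    { replace (2 * q / (1 - r) * Rpower h alpha) with (2 * q * Rpower h alpha * / (1 - r))
        by (unfold Rdiv; ring).
      rewrite <- (Rmult_1_l (/ (1 - r))) at 1.
      apply Rmult_le_compat_r; [left; apply Rinv_0_lt_compat|]; nra. }
    pose proof (Kan_sub_le x y). pose proof (Rpower_pos h alpha). nra.
Qed.

Lemma Kan_holder x y :
  Rabs (Kan alpha nu x - Kan alpha nu y) <= Cconst alpha nu * rpow (Rabs (x - y)) alpha.
Proof.
  unfold rpow. destruct Rle_dec as [H0|H0].
  - assert (x = y).
    { destruct (Req_dec (x - y) 0); [lra|]. pose proof (Rabs_pos_lt _ H). lra. }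
    subst y. rewrite Rminus_diag, Rabs_R0. lra.
  - apply Kan_holder_pos. lra.
Qed.

Lemma Kan_continuous x : continuity_pt (Kan alpha nu) x.
Proof.
  pose proof Cconst_pos as HC. set (C := Cconst alpha nu) in *.
  intros eps Heps. simpl; unfold R_dist.
  exists (Rpower (eps / C) (/ alpha)). split; [apply Rpower_pos|].
  intros y [_ Hy]. eapply Rle_lt_trans; [apply Kan_holder|]. fold C.
  assert (rpow (Rabs (y - x)) alpha < eps / C).
  { unfold rpow. destruct Rle_dec; [apply Rdiv_lt_0_compat; lra|].
    replace (eps / C) with (Rpower (Rpower (eps / C) (/ alpha)) alpha).
    - apply Rlt_Rpower_l; lra.
    - rewrite Rpower_mult, Rinv_l, Rpower_1 by (try apply Rdiv_lt_0_compat; lra).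
      reflexivity. }
  replace eps with (C * (eps / C)) by (field; lra). apply Rmult_lt_compat_l; lra.
Qed.

Lemma term_diff_tm_head x m k : (k <= m)%nat ->
  Rabs (term_diff alpha nu (x + tm nu m x) x k) = Rabs (tm nu m x) * q ^ k.
Proof.
  intros Hk. unfold term_diff, term.
  rewrite <- Rmult_minus_distr_l, Rabs_mult, phi_tm_head by exact Hk.
  rewrite scale_weight, pow2_scale, Rabs_right by (left; apply pow_lt, ratio_bounds).
  fold b. rewrite <- ratio_mul_scale, Rpow_mult_distr. ring.
Qed.

Lemma term_diff_tm_tail x m k : (m < k)%nat -> term_diff alpha nu (x + tm nu m x) x k = 0.
Proof. intros Hk. unfold term_diff, term. rewrite phi_tm_tail by assumption. ring. Qed.

Lemma Kan_tm_sub x m :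
  Kan alpha nu (x + tm nu m x) - Kan alpha nu x = sum_f_R0 (term_diff alpha nu (x + tm nu m x) x) m.
Proof.
  rewrite Kan_sub, (Series_incr_n _ (S m));
    [| lia | apply ex_series_Rabs, abs_term_diff_summable].
  rewrite (Series_ext _ (fun _ => 0)) by (intros; apply term_diff_tm_tail; lia).
  rewrite Series_const_0. simpl Init.Nat.pred. ring.
Qed.

Lemma Kan_tm_sub_ge x m :
  Rabs (tm nu m x) * q ^ m * (q - 2) / (q - 1) <=
  Rabs (Kan alpha nu (x + tm nu m x) - Kan alpha nu x).
Proof.
  pose proof lipschitz_ratio_gt_1. set (c := Rabs (tm nu m x)).
  assert (Hc : 0 < c) by (unfold c; rewrite tm_abs; apply Rdiv_lt_0_compat;
                          [apply Rinv_0_lt_compat, pow_lt|]; lra).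
  rewrite Kan_tm_sub.
  eapply Rle_trans; [|apply (sum_f_R0_abs_ge_last _ c q m); [lra | apply term_diff_tm_head]].
  assert (0 < c / (q - 1)) by (apply Rdiv_lt_0_compat; lra).
  apply Rle_trans with (c * q ^ m * (q - 2) / (q - 1) + c / (q - 1)); [lra|].
  right; field; lra.
Qed.

Lemma Kconst_mul_rpow_tm m beta x :
  Kconst m nu alpha beta * rpow (Rabs (tm nu m x)) beta =
  Rabs (tm nu m x) * q ^ m * (q - 2) / (q - 1).
Proof.
  pose proof (scale_ge_4 nu Hnu). fold b in H.
  rewrite tm_abs, pow2_scale. fold b.
  assert (Hs : / b ^ m / 2 = Rpower b (- INR m) * Rpower 2 (Ropp 1)).
  { rewrite Rpower_opp_INR, Rpower_Ropp, Rpower_1; lra. }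
  unfold rpow. destruct Rle_dec as [Hc|_].
  { exfalso. pose proof (Rinv_0_lt_compat (b ^ m) (pow_lt b m ltac:(lra))). lra. }
  rewrite Hs, <- Rpower_mult_distr by apply Rpower_pos.
  unfold Kconst. rewrite !Rpower2_scale. fold b q.
  rewrite <- Rpower_pow, !Rpower_mult by apply Rpower_pos.
  unfold q. rewrite <- Rpower_pow by apply Rpower_pos. rewrite Rpower_mult. fold q.
  assert (E2 : Rpower 2 (beta - 1) * Rpower 2 (Ropp 1 * beta) = Rpower 2 (Ropp 1))
    by (rewrite <- Rpower_plus; f_equal; ring).
  assert (Eb : Rpower b ((beta - alpha) * INR m) * Rpower b (- INR m * beta) =
               Rpower b (- INR m) * Rpower b ((1 - alpha) * INR m))
    by (rewrite <- !Rpower_plus; f_equal; ring).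
  transitivity (Rpower 2 (beta - 1) * Rpower 2 (Ropp 1 * beta) *
    (Rpower b ((beta - alpha) * INR m) * Rpower b (- INR m * beta)) * ((q - 2) / (q - 1))).
  - unfold Rdiv; ring.
  - rewrite E2, Eb. unfold Rdiv; ring.
Qed.

Lemma Kan_tm_ratio_ge x m beta :
  Rabs (Kan alpha nu (x + tm nu m x) - Kan alpha nu x) / rpow (Rabs (tm nu m x)) beta
  >= Kconst m nu alpha beta.
Proof.
  assert (Hw : 0 < rpow (Rabs (tm nu m x)) beta).
  { rewrite tm_abs. unfold rpow. destruct Rle_dec as [Hc|]; [|apply Rpower_pos].
    exfalso. pose proof (Rinv_0_lt_compat _ (pow_lt 2 (2 * nu * m) ltac:(lra))). lra. }
  apply Rle_ge, (Rle_div_r _ _ _ Hw).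
  rewrite Kconst_mul_rpow_tm. apply Kan_tm_sub_ge.
Qed.

Lemma lipschitz_ratio_gt_2 : 2 * INR nu > 1 / (1 - alpha) -> 2 < q.
Proof.
  intros Hbig. unfold q, b. rewrite <- Rpower2_scale, <- (Rpower_1 2) at 1 by lra.
  apply Rpower_lt; [lra|].
  replace (2 * INR nu * (1 - alpha)) with (2 * INR nu / (1 / (1 - alpha))) by (field; lra).
  apply Rlt_div_r; [apply Rdiv_lt_0_compat|]; lra.
Qed.

Lemma Kconst_eventually_gt beta C : 2 < q -> alpha < beta ->
  exists N, forall m, (N <= m)%nat -> C < Kconst m nu alpha beta.
Proof.
  intros Hq Hbeta. pose proof (scale_ge_4 nu Hnu).
  set (Q := Rpower b (beta - alpha)).
  set (c0 := Rpower 2 (beta - 1) * (q - 2) / (q - 1)).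
  assert (HK : forall m, Kconst m nu alpha beta = c0 * Q ^ m)
    by (intros m; unfold Kconst; rewrite !Rpower2_scale; reflexivity).
  assert (HQ : 1 < Q).
  { unfold Q. rewrite <- (Rpower_O b) at 1 by (unfold b; lra). apply Rpower_lt; unfold b; lra. }
  assert (Hc0 : 0 < c0).
  { apply Rdiv_lt_0_compat; [apply Rmult_lt_0_compat; [apply Rpower_pos|]|]; lra. }
  destruct (INR_archimed (c0 * (Q - 1)) C) as [N HN]; [nra|].
  exists N. intros m Hm. rewrite HK.
  apply le_INR in Hm. pose proof (pow_ge_linear Q m ltac:(lra)).
  assert (INR N * (Q - 1) <= Q ^ m).
  { apply Rle_trans with (INR m * (Q - 1)); [apply Rmult_le_compat_r|]; lra. }
  replace (INR N * (c0 * (Q - 1))) with (c0 * (INR N * (Q - 1))) in HN by ring.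
  apply Rlt_le_trans with (c0 * (INR N * (Q - 1))); [lra|].
  apply Rmult_le_compat_l; lra.
Qed.

Lemma Kan_not_holder_at x beta : 2 * INR nu > 1 / (1 - alpha) -> alpha < beta ->
  ~ holder_at (Kan alpha nu) beta x.
Proof.
  intros Hbig Hbeta [r0 [C [Hr0 [HC Hholder]]]].
  destruct (Kconst_eventually_gt beta C (lipschitz_ratio_gt_2 Hbig) Hbeta) as [N1 HN1].
  destruct (tm_eventually_small nu x r0 Hnu Hr0) as [N2 HN2].
  set (m := Nat.max N1 N2).
  assert (Hstep : x - r0 <= x + tm nu m x <= x + r0).
  { pose proof (HN2 m ltac:(lia)). unfold Rabs in *; destruct Rcase_abs; lra. }
  pose proof (Hholder _ Hstep) as Hle.
  replace (x + tm nu m x - x) with (tm nu m x) in Hle by ring.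
  assert (Hw : 0 < rpow (Rabs (tm nu m x)) beta).
  { rewrite tm_abs. unfold rpow. destruct Rle_dec as [Hc|]; [|apply Rpower_pos].
    exfalso. pose proof (Rinv_0_lt_compat _ (pow_lt 2 (2 * nu * m) ltac:(lra))). lra. }
  pose proof (Kan_tm_ratio_ge x m beta) as Hratio.
  apply (Rle_div_l _ _ _ Hw) in Hle. pose proof (HN1 m ltac:(lia)). lra.
Qed.

End Kernel.

Theorem theorem1 (alpha : R) (nu : nat) (Ha : 0 < alpha < 1) (Hnu : (1 <= nu)%nat) :
  (holder_global (Kan alpha nu) alpha /\
   (forall x, 0 <= Kan alpha nu x <= 1 / (1 - Rpower 2 (- (2 * INR nu * alpha)))) /\
   (forall x y, Rabs (x - y) <= 2 ->
      Rabs (Kan alpha nu x - Kan alpha nu y) <= Cconst alpha nu * rpow (Rabs (x - y)) alpha))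
  /\
  (2 * INR nu > 1 / (1 - alpha) ->
     (forall x beta, alpha < beta <= 1 -> ~ holder_at (Kan alpha nu) beta x) /\
     (forall x (m : nat) beta, alpha < beta <= 1 ->
        Rabs (Kan alpha nu (x + tm nu m x) - Kan alpha nu x) / rpow (Rabs (tm nu m x)) beta
        >= Kconst m nu alpha beta)).
Proof.
  split; [split; [split|split]|].
  - exact (Kan_continuous alpha nu Ha Hnu).
  - exists (Cconst alpha nu). apply Kan_holder; assumption.
  - intros x. pose proof (Kan_bounds alpha nu Ha Hnu x).
    replace (- (2 * INR nu * alpha)) with (2 * INR nu * (- alpha)) by ring.
    rewrite Rpower2_scale. lra.
  - intros x y _. apply Kan_holder; assumption.
  - intros Hbig. split.
    + intros x beta Hbeta. apply Kan_not_holder_at; tauto.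
    + intros x m beta _. apply Kan_tm_ratio_ge; assumption.
Qed.
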